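(* Let $\mathcal{K}$ be a class of groups closed under homomorphic images, subgroups, and direct products of finitely many factors. If a group $G$ is conjugacy $\mathcal{K}$-separable, then for every finite normal subgroup $N$ of $G$ the quotient group $G/N$ is conjugacy $\mathcal{K}$-separable.
   Context: A group $G$ is conjugacy $\mathcal{K}$-separable if whenever $a,b\in G$ are not conjugate in $G$, there is a homomorphism $\varphi$ of $G$ onto a group $X\in\mathcal{K}$ such that $a\varphi$ and $b\varphi$ are not conjugate in $X$. *)

From Stdlib Require Import List ClassicalEpsilon FunctionalExtensionality
  PropExtensionality ProofIrrelevance.

Set Implicit Arguments.
Unset Strict Implicit.

Record group := Group {
  carrier :> Type;
  mul : carrier -> carrier -> carrier;
  one : carrier;
  inv : carrier -> carrier;
  mulA : forall x y z, mul x (mul y z) = mul (mul x y) z;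
  mul1g : forall x, mul one x = x;
  mulg1 : forall x, mul x one = x;
  mulVg : forall x, mul (inv x) x = one;
  mulgV : forall x, mul x (inv x) = one }.

Arguments mul {g}.
Arguments one {g}.
Arguments inv {g}.

Definition conjugate (G : group) (a b : G) : Prop :=
  exists g : G, b = mul (mul (inv g) a) g.

Definition is_hom (G H : group) (f : G -> H) : Prop :=
  forall x y : G, f (mul x y) = mul (f x) (f y).

Definition surjective (A B : Type) (f : A -> B) : Prop :=
  forall y : B, exists x : A, f x = y.

Definition group_class := group -> Prop.

Definition conj_sep (K : group_class) (G : group) : Prop :=
  forall a b : G, ~ conjugate a b ->
    exists (X : group) (phi : G -> X),
      K X /\ is_hom phi /\ surjective phi /\ ~ conjugate (phi a) (phi b).

Record subgroup_pred (G : group) (P : G -> Prop) : Prop := {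
  sg_one : P one;
  sg_mul : forall x y, P x -> P y -> P (mul x y);
  sg_inv : forall x, P x -> P (inv x) }.

Record normal_subgroup_pred (G : group) (N : G -> Prop) : Prop := {
  ns_sub : subgroup_pred N;
  ns_conj : forall g x, N x -> N (mul (mul (inv g) x) g) }.

Definition finite_pred (T : Type) (P : T -> Prop) : Prop :=
  exists l : list T, forall x, P x -> In x l.

Lemma sig_eqP (T : Type) (P : T -> Prop) (u v : {x : T | P x}) :
  proj1_sig u = proj1_sig v -> u = v.
Proof.
destruct u as [x px], v as [y py]; simpl; intros ->.
f_equal; apply proof_irrelevance.
Qed.

Section SubGroup.
Variables (G : group) (P : G -> Prop) (HP : subgroup_pred P).

Definition sub_mul (x y : {x : G | P x}) : {x : G | P x} :=
  exist _ (mul (proj1_sig x) (proj1_sig y))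
    (sg_mul HP (proj2_sig x) (proj2_sig y)).
Definition sub_one : {x : G | P x} := exist _ one (sg_one HP).
Definition sub_inv (x : {x : G | P x}) : {x : G | P x} :=
  exist _ (inv (proj1_sig x)) (sg_inv HP (proj2_sig x)).

Definition subgroup_of : group.
Proof.
refine (@Group {x : G | P x} sub_mul sub_one sub_inv _ _ _ _ _);
  intros; apply sig_eqP; simpl.
- apply mulA.
- apply mul1g.
- apply mulg1.
- apply mulVg.
- apply mulgV.
Defined.
End SubGroup.

Section Product.
Variables (n : nat) (F : {i : nat | i < n} -> group).

Definition prod_carrier := forall i, F i.
Definition prod_mul (x y : prod_carrier) : prod_carrier := fun i => mul (x i) (y i).
Definition prod_one : prod_carrier := fun i => one.
Definition prod_inv (x : prod_carrier) : prod_carrier := fun i => inv (x i).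

Definition prod_group : group.
Proof.
refine (@Group prod_carrier prod_mul prod_one prod_inv _ _ _ _ _);
  intros; apply functional_extensionality_dep; intro i; unfold prod_mul, prod_one, prod_inv.
- apply mulA.
- apply mul1g.
- apply mulg1.
- apply mulVg.
- apply mulgV.
Defined.
End Product.

Definition closed_hom_images (K : group_class) : Prop :=
  forall (X Y : group) (f : X -> Y), is_hom f -> surjective f -> K X -> K Y.

Definition closed_subgroups (K : group_class) : Prop :=
  forall (X : group) (P : X -> Prop) (HP : subgroup_pred P),
    K X -> K (subgroup_of HP).

Definition closed_fin_products (K : group_class) : Prop :=
  forall (n : nat) (F : {i : nat | i < n} -> group),
    (forall i, K (F i)) -> K (prod_group F).

(** * Quotient group G/N (elements are the left cosets aN, as subsets of G) *)
Section GroupLemmas.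
Variable G : group.

Lemma inv_uniq (x y : G) : mul x y = one -> y = inv x.
Proof.
intro h. rewrite <- (mul1g y), <- (mulVg x), <- mulA, h, mulg1. reflexivity.
Qed.

Lemma invK (x : G) : inv (inv x) = x.
Proof. symmetry; apply inv_uniq, mulVg. Qed.

Lemma invM (x y : G) : inv (mul x y) = mul (inv y) (inv x).
Proof.
symmetry; apply inv_uniq.
rewrite <- mulA, (mulA y), mulgV, mul1g, mulgV; reflexivity.
Qed.
End GroupLemmas.

Section Quotient.
Variables (G : group) (N : G -> Prop) (HN : normal_subgroup_pred N).

Definition qcarrier :=
  {C : G -> Prop | exists a : G, C = fun x => N (mul (inv a) x)}.

Definition coset (a : G) : qcarrier :=
  exist _ (fun x => N (mul (inv a) x)) (ex_intro _ a eq_refl).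

Definition rep (C : qcarrier) : G :=
  proj1_sig (constructive_indefinite_description _ (proj2_sig C)).

Lemma rep_spec (C : qcarrier) : coset (rep C) = C.
Proof.
unfold rep; destruct (constructive_indefinite_description _ _) as [a ha].
apply sig_eqP; simpl; symmetry; exact ha.
Qed.

Lemma coset_surj (C : qcarrier) : exists a, C = coset a.
Proof. exists (rep C); symmetry; apply rep_spec. Qed.

Let NS := ns_sub HN.

Lemma coset_eqE (a b : G) : coset a = coset b -> N (mul (inv a) b).
Proof.
intro h. apply (f_equal (@proj1_sig _ _)) in h; simpl in h.
assert (e := f_equal (fun f => f b) h); simpl in e.
rewrite e, mulVg; apply (sg_one NS).
Qed.

Lemma coset_eqI (a b : G) : N (mul (inv a) b) -> coset a = coset b.
Proof.
intro h. apply sig_eqP; simpl.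
apply functional_extensionality; intro x; apply propositional_extensionality.
split; intro hx.
- replace (mul (inv b) x) with (mul (inv (mul (inv a) b)) (mul (inv a) x)).
  + apply (sg_mul NS); [apply (sg_inv NS) |]; assumption.
  + rewrite invM, invK, <- mulA, (mulA a), mulgV, mul1g; reflexivity.
- replace (mul (inv a) x) with (mul (mul (inv a) b) (mul (inv b) x)).
  + apply (sg_mul NS); assumption.
  + rewrite <- mulA, (mulA b), mulgV, mul1g; reflexivity.
Qed.

Lemma rep_coset (a : G) : N (mul (inv (rep (coset a))) a).
Proof. apply coset_eqE; apply rep_spec. Qed.

Definition qmul (C D : qcarrier) : qcarrier := coset (mul (rep C) (rep D)).
Definition qone : qcarrier := coset one.
Definition qinv (C : qcarrier) : qcarrier := coset (inv (rep C)).

Lemma qmulE (a b : G) : qmul (coset a) (coset b) = coset (mul a b).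
Proof.
unfold qmul. apply coset_eqI.
set (a' := rep (coset a)). set (b' := rep (coset b)).
assert (h1 : N (mul (inv a') a)) by apply rep_coset.
assert (h2 : N (mul (inv b') b)) by apply rep_coset.
replace (mul (inv (mul a' b')) (mul a b)) with
  (mul (mul (mul (inv b') (mul (inv a') a)) b') (mul (inv b') b)).
- apply (sg_mul NS); [apply (ns_conj HN) |]; assumption.
- rewrite invM. rewrite <- !mulA. f_equal. f_equal. f_equal.
  rewrite (mulA b'), mulgV, mul1g; reflexivity.
Qed.

Lemma qinvE (a : G) : qinv (coset a) = coset (inv a).
Proof.
unfold qinv. apply coset_eqI.
set (a' := rep (coset a)).
assert (h1 : N (mul (inv a') a)) by apply rep_coset.
rewrite invK.
replace (mul a' (inv a)) with
  (mul (mul (inv (inv a')) (inv (mul (inv a') a))) (inv a')).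
- apply (ns_conj HN), (sg_inv NS); assumption.
- rewrite invK, invM, invK. rewrite <- !mulA, mulgV, mulg1; reflexivity.
Qed.

Definition quotient : group.
Proof.
refine (@Group qcarrier qmul qone qinv _ _ _ _ _).
- intros x y z.
  destruct (coset_surj x) as [a ->]; destruct (coset_surj y) as [b ->];
  destruct (coset_surj z) as [c ->].
  rewrite !qmulE, mulA; reflexivity.
- intros x; destruct (coset_surj x) as [a ->]; unfold qone.
  rewrite qmulE, mul1g; reflexivity.
- intros x; destruct (coset_surj x) as [a ->]; unfold qone.
  rewrite qmulE, mulg1; reflexivity.
- intros x; destruct (coset_surj x) as [a ->]; unfold qone.
  rewrite qinvE, qmulE, mulVg; reflexivity.
- intros x; destruct (coset_surj x) as [a ->]; unfold qone.
  rewrite qinvE, qmulE, mulgV; reflexivity.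
Defined.
End Quotient.

From Stdlib Require Import List ClassicalEpsilon FunctionalExtensionality.

Set Implicit Arguments.
Unset Strict Implicit.

(* If aN and bN are not conjugate in G/N, then a is conjugate to none of the
   finitely many elements bn with n in N. Separate a from each bn by a
   homomorphism phi_n into a group of K and let phi : G -> S be the product of
   the phi_n, corestricted to its image; S is in K as a subgroup of a finite
   direct product, hence so is S / phi(N). The map G/N -> S / phi(N) induced by
   phi keeps aN and bN apart: a conjugacy there gives phi(a)^g = phi(bn) for
   some n in N, and projecting to the factor of n contradicts the choice of
   phi_n. *)

Lemma surjective_comp (A B C : Type) (f : A -> B) (g : B -> C) :
  surjective f -> surjective g -> surjective (fun x => g (f x)).
Proof.
intros fs gs z. destruct (gs z) as [y <-]. destruct (fs y) as [x <-].
exists x; reflexivity.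
Qed.

Lemma eq_of_mulVg_eq1 (G : group) (x y : G) : mul (inv x) y = one -> x = y.
Proof.
intro h. rewrite <- (mulg1 x), <- h, mulA, mulgV, mul1g. reflexivity.
Qed.

Lemma hom_comp (G H L : group) (f : G -> H) (g : H -> L) :
  is_hom f -> is_hom g -> is_hom (fun x => g (f x)).
Proof. intros hf hg x y. rewrite hf, hg. reflexivity. Qed.

Section Homomorphisms.
Variables (G H : group) (f : G -> H) (hf : is_hom f).

Lemma hom_one : f one = one.
Proof.
assert (e : mul (f one) (f one) = mul (f one) one).
{ rewrite <- hf, mul1g, mulg1; reflexivity. }
rewrite <- (mul1g (f one)), <- (mulVg (f one)), <- mulA, e, mulA, mulVg, mul1g.
reflexivity.
Qed.

Lemma hom_inv (x : G) : f (inv x) = inv (f x).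
Proof. apply inv_uniq. rewrite <- hf, mulgV. apply hom_one. Qed.

Lemma hom_conjugate (a b : G) : conjugate a b -> conjugate (f a) (f b).
Proof. intros [g ->]. exists (f g). rewrite !hf, hom_inv. reflexivity. Qed.

Definition range : H -> Prop := fun y => exists x, f x = y.

Definition image (P : G -> Prop) : H -> Prop := fun y => exists x, P x /\ f x = y.

Lemma range_subgroup : subgroup_pred range.
Proof.
split.
- exists one; apply hom_one.
- intros x y [g1 <-] [g2 <-]. exists (mul g1 g2); apply hf.
- intros x [g <-]. exists (inv g); apply hom_inv.
Qed.

Definition corestr (x : G) : subgroup_of range_subgroup :=
  exist _ (f x) (ex_intro _ x eq_refl).

Lemma corestr_hom : is_hom corestr.
Proof. intros x y; apply sig_eqP, hf. Qed.

Lemma corestr_surjective : surjective corestr.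
Proof. intros [y [x <-]]. exists x; apply sig_eqP; reflexivity. Qed.

Lemma image_normal (fs : surjective f) (N : G -> Prop) :
  normal_subgroup_pred N -> normal_subgroup_pred (image N).
Proof.
intro HN. destruct HN as [[N1 NM NV] NJ].
split; [split|].
- exists one; split; [exact N1 | apply hom_one].
- intros x y [n1 [h1 <-]] [n2 [h2 <-]].
  exists (mul n1 n2); split; [apply NM; assumption | apply hf].
- intros x [n [hn <-]]. exists (inv n); split; [apply NV, hn | apply hom_inv].
- intros y x [n [hn <-]]. destruct (fs y) as [g <-].
  exists (mul (mul (inv g) n) g); split; [apply NJ, hn |].
  rewrite !hf, hom_inv; reflexivity.
Qed.

End Homomorphisms.

Arguments corestr_surjective {G H f} hf.

Section QuotientMap.
Variables (G : group) (N : G -> Prop) (HN : normal_subgroup_pred N).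

Lemma coset_hom : is_hom (coset N : G -> quotient HN).
Proof. intros a b; symmetry; apply (qmulE HN). Qed.

Lemma coset_surjective : surjective (coset N : G -> quotient HN).
Proof. intro C. destruct (coset_surj C) as [a ->]. exists a; reflexivity. Qed.

Lemma coset_eq1 (x : G) : N x -> (coset N x : quotient HN) = one.
Proof.
intro hx. apply (coset_eqI HN). rewrite mulg1. apply (sg_inv (ns_sub HN)), hx.
Qed.

Lemma conjugate_cosetP (a b : G) :
  @conjugate (quotient HN) (coset N a) (coset N b) <->
  exists n, N n /\ conjugate a (mul b n).
Proof.
split.
- intros [C eC]. destruct (coset_surj C) as [g ->].
  rewrite <- (hom_inv coset_hom), <- !coset_hom in eC.
  exists (mul (inv b) (mul (mul (inv g) a) g)). split.
  + apply (coset_eqE HN), eC.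
  + exists g. rewrite mulA, mulgV, mul1g. reflexivity.
- intros [n [hn hc]].
  replace (coset N b) with (coset N (mul b n) : quotient HN).
  + apply (hom_conjugate coset_hom hc).
  + symmetry; apply (coset_eqI HN). rewrite mulA, mulVg, mul1g. exact hn.
Qed.

End QuotientMap.

Arguments coset_surjective {G N} HN.

Section QuotientLift.
Variables (G H : group) (N : G -> Prop) (HN : normal_subgroup_pred N).
Variables (f : G -> H) (hf : is_hom f) (hN : forall n, N n -> f n = one).

Definition qlift (C : quotient HN) : H := f (rep C).

Lemma qlift_coset (a : G) : qlift (coset N a) = f a.
Proof.
unfold qlift. apply eq_of_mulVg_eq1. rewrite <- (hom_inv hf), <- hf. apply hN, (rep_coset HN).
Qed.

Lemma qlift_hom : is_hom qlift.
Proof.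
intros C D. destruct (coset_surj C) as [a ->], (coset_surj D) as [b ->].
rewrite <- (coset_hom HN), !qlift_coset. apply hf.
Qed.

Lemma qlift_surjective : surjective f -> surjective qlift.
Proof.
intros fs y. destruct (fs y) as [a <-]. exists (coset N a). apply qlift_coset.
Qed.

End QuotientLift.

Arguments qlift {G H N} HN f C.

Lemma finite_pred_enum (T : Type) (P : T -> Prop) (x0 : T) :
  P x0 -> finite_pred P ->
  exists (k : nat) (m : {i : nat | i < k} -> T),
    (forall i, P (m i)) /\ (forall x, P x -> exists i, m i = x).
Proof.
intros h0 [l hl].
exists (length l), (fun i =>
  if excluded_middle_informative (P (nth (proj1_sig i) l x0))
  then nth (proj1_sig i) l x0 else x0).
split.
- intro i. destruct excluded_middle_informative; assumption.
- intros x hx. destruct (In_nth l x x0 (hl x hx)) as [j [hj <-]].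
  exists (exist _ j hj); simpl.
  destruct excluded_middle_informative; [reflexivity | contradiction].
Qed.

Lemma conj_sep_family (K : group_class) (G : group) (HG : conj_sep K G)
  (I : Type) (a : G) (b : I -> G) :
  (forall i, ~ conjugate a (b i)) ->
  exists (F : I -> group) (phi : forall i, G -> F i), forall i,
    K (F i) /\ is_hom (phi i) /\ ~ conjugate (phi i a) (phi i (b i)).
Proof.
intro hab.
destruct (choice (fun i (Xphi : {X : group & G -> X}) =>
  K (projT1 Xphi) /\ is_hom (projT2 Xphi) /\
  ~ conjugate (projT2 Xphi a) (projT2 Xphi (b i)))) as [c hc].
- intro i. destruct (HG _ _ (hab i)) as [X [phi [hK [hphi [_ hsep]]]]].
  exists (existT _ X phi); auto.
- exists (fun i => projT1 (c i)), (fun i => projT2 (c i)). exact hc.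
Qed.

Section SeparatingCosets.
Variables (K : group_class) (HKhom : closed_hom_images K)
  (HKsub : closed_subgroups K) (HKprod : closed_fin_products K).
Variables (G : group) (N : G -> Prop) (HN : normal_subgroup_pred N).
Variables (k : nat) (F : {i : nat | i < k} -> group) (phi : forall i, G -> F i).
Hypotheses (KF : forall i, K (F i)) (hphi : forall i, is_hom (phi i)).

Definition diag (g : G) : prod_group F := fun i => phi i g.

Lemma diag_hom : is_hom diag.
Proof. intros x y. apply functional_extensionality_dep; intro i; apply hphi. Qed.

Lemma separate_cosets (a b : G) :
  (forall n, N n -> exists i, ~ conjugate (phi i a) (phi i (mul b n))) ->
  exists (X : group) (psi : quotient HN -> X),
    K X /\ is_hom psi /\ surjective psi /\
    ~ conjugate (psi (coset N a)) (psi (coset N b)).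
Proof.
intro hsep.
pose (HM := image_normal (corestr_hom diag_hom) (corestr_surjective diag_hom) HN).
pose (f := fun g => coset _ (corestr diag_hom g) : quotient HM).
assert (hf : is_hom f) by exact (hom_comp (corestr_hom diag_hom) (coset_hom HM)).
assert (hN : forall n, N n -> f n = one).
{ intros n hn. apply coset_eq1. exists n; split; [exact hn | reflexivity]. }
exists (quotient HM), (qlift HN f). split; [| split; [| split]].
- apply (HKhom (coset_hom HM) (coset_surjective HM)), HKsub, HKprod, KF.
- exact (qlift_hom hf hN).
- apply (qlift_surjective HN hf hN).
  exact (surjective_comp (corestr_surjective diag_hom) (coset_surjective HM)).
- rewrite !(qlift_coset HN hf hN). intro hc.
  apply conjugate_cosetP in hc. destruct hc as [s [[n [hn <-]] hc]].
  rewrite <- (corestr_hom diag_hom) in hc.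
  destruct (hsep n hn) as [i hi]. apply hi.
  exact (hom_conjugate (f := fun s : subgroup_of (range_subgroup diag_hom) =>
    proj1_sig s i) (fun _ _ => eq_refl) hc).
Qed.

End SeparatingCosets.

Theorem proposition2 (K : group_class)
  (HKhom : closed_hom_images K)
  (HKsub : closed_subgroups K)
  (HKprod : closed_fin_products K)
  (G : group) (HG : conj_sep K G)
  (N : G -> Prop) (HN : normal_subgroup_pred N) (HNfin : finite_pred N) :
  conj_sep K (quotient HN).
Proof.
intros A B hAB.
destruct (coset_surj A) as [a ->], (coset_surj B) as [b ->].
destruct (finite_pred_enum (sg_one (ns_sub HN)) HNfin) as [k [m [hmN hmS]]].
assert (hnc : forall i, ~ conjugate a (mul b (m i))).
{ intros i hc. apply hAB, conjugate_cosetP. exists (m i); auto. }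
destruct (conj_sep_family HG (b := fun i => mul b (m i)) hnc) as [F [phi hphi]].
apply (separate_cosets HKhom HKsub HKprod HN (phi := phi)
  (fun i => proj1 (hphi i)) (fun i => proj1 (proj2 (hphi i)))).
intros n hn. destruct (hmS n hn) as [i <-]. exists i; apply hphi.
Qed.
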